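(* Let $G=(V,E)$ be a connected graph with at least two nodes, let $v\in V$ be any node, and let $P_{\mathrm{FSTAB}}(G)=\{\bm{x}\in\mathbb{R}^V: x_u+x_w\le 1 \text{ for all } uw\in E,\ \bm{x}\ge\bm{0}\}$, with circuits taken with respect to this linear description. Then $\mathcal{CD}(P_{\mathrm{FSTAB}}(G))=\mathcal{O}(\varepsilon(v))$, i.e. there is an absolute constant $C$ (independent of $G$ and $v$) with $\mathcal{CD}(P_{\mathrm{FSTAB}}(G))\le C\cdot\varepsilon(v)$.
   Context: The eccentricity $\varepsilon(v)$ is the smallest $k$ such that every node of $G$ is at graph distance at most $k$ from $v$. Circuits: for a polytope $P=\{\bm{x}: A\bm{x}=\bm{b},\ B\bm{x}\le \bm{d}\}$ given by a fixed linear system, a nonzero vector $\bm{g}$ is a circuit of $P$ if $A\bm{g}=\bm{0}$ and $\operatorname{supp}(B\bm{g})$ is inclusion-minimal among the sets $\operatorname{supp}(B\bm{y})$ with $A\bm{y}=\bm{0}$, $\bm{y}\neq\bm{0}$. A point $\bm{x}''\in P$ is one circuit step from $\bm{x}'\in P$ if $\bm{x}''=\bm{x}'+\alpha\bm{c}$ for a circuit $\bm{c}$ and $\alpha>0$ maximal such that $\bm{x}'+\alpha\bm{c}\in P$. A circuit walk of length $l$ is a sequence $\bm{z}^0,\dots,\bm{z}^l$ in $P$ with each $\bm{z}^i$ one circuit step from $\bm{z}^{i-1}$; the circuit distance is the length of a shortest circuit walk from one point to another, and $\mathcal{CD}(P)$ is the maximum circuit distance over ordered pairs of vertices of $P$.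 *)

From HB Require Import structures.
From mathcomp Require Import all_boot all_order all_algebra.
From mathcomp Require Import reals.
Set Implicit Arguments. Unset Strict Implicit. Unset Printing Implicit Defensive.
Import Order.TTheory GRing.Theory Num.Theory.
Local Open Scope ring_scope.

Section FSTAB.
Variables (R : realType) (T : finType) (e : rel T).

Definition dist_le (v w : T) (k : nat) : Prop :=
  exists p : seq T, [/\ path e v p, last v p = w & (size p <= k)%N].

Definition within (v : T) (k : nat) : Prop := forall w, dist_le v w k.

Definition is_eccentricity (v : T) (k : nat) : Prop :=
  within v k /\ forall j, within v j -> (k <= j)%N.

(* Linear description of P_FSTAB(G):  B x <= d with rows
   inl u      :  - x_u         <= 0   (nonnegativity)
   inr (u,w)  :  x_u + x_w     <= 1   for each edge uw (e u w);
   no equality constraints (A is empty). *)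
Definition is_row (r : T + (T * T)) : bool :=
  match r with inl _ => true | inr (u, w) => e u w end.

Definition Bx (x : T -> R) (r : T + (T * T)) : R :=
  match r with inl u => - x u | inr (u, w) => x u + x w end.

Definition rhs (r : T + (T * T)) : R :=
  match r with inl _ => 0 | inr _ => 1 end.

Definition inP (x : T -> R) : Prop := forall r, is_row r -> Bx x r <= rhs r.

Definition suppB (g : T -> R) : {set T + (T * T)} :=
  [set r | is_row r && (Bx g r != 0)].

Definition nonzero (g : T -> R) : Prop := exists u, g u != 0.

Definition circuit (g : T -> R) : Prop :=
  nonzero g /\ forall y, nonzero y -> suppB y \subset suppB g -> suppB y = suppB g.

Definition add_scaled (x : T -> R) (a : R) (c : T -> R) : T -> R :=
  fun u => x u + a * c u.

Definition circuit_step (x1 x2 : T -> R) : Prop :=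
  exists (c : T -> R) (a : R),
    [/\ circuit c, 0 < a, x2 = add_scaled x1 a c, inP x2 &
        forall b, a < b -> ~ inP (add_scaled x1 b c)].

Inductive circuit_walk : (T -> R) -> (T -> R) -> nat -> Prop :=
| cw_nil x : circuit_walk x x 0
| cw_cons x z y l : circuit_step x z -> circuit_walk z y l ->
    circuit_walk x y l.+1.

Definition vertex (x : T -> R) : Prop :=
  inP x /\ forall (y z : T -> R) (l : R), inP y -> inP z -> 0 < l -> l < 1 ->
    x = (fun u => l * y u + (1 - l) * z u) -> y = z.

End FSTAB.

From mathcomp Require Import all_boot all_order all_algebra.
From mathcomp Require Import reals.
From mathcomp Require Import ring lra zify.
From mathcomp Require Import boolp.
Import Order.TTheory GRing.Theory Num.Theory.
Local Open Scope ring_scope.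
Set Implicit Arguments. Unset Strict Implicit. Unset Printing Implicit Defensive.

(* Root the graph at r and sort the nodes into BFS layers.  A vector that is +-1
   on a parent-closed set of nodes, with the sign alternating from layer to layer,
   is a circuit: every tree edge inside the set gets B-value 0, which pins the
   vector down up to a scalar.  Stepping along such a vector on a ball around r
   turns a "wave" (the value a on every other layer of the ball) into the
   complementary wave, and may lower part of the next layer by a at the same time;
   three such steps absorb one more layer into the wave.  Vertices are
   half-integral, so in O(ecc) steps a vertex with the value a at r is moved to the
   point that is a at r and 0 elsewhere, and from there to 0.  Waves with a = 1
   need that no edge lies inside a layer of the ball; if the graph has such an
   edge, an integral vertex is first turned into a half-integral point by one step
   that this edge stops.  Rooting at a nonzero coordinate of the vertex at most
   doubles the distances. *)

Section CircuitWalks.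
Variables (R : realType) (T : finType) (e : rel T).

Lemma Bx_add_scaled (x c : T -> R) a rho :
  Bx (add_scaled x a c) rho = Bx x rho + a * Bx c rho.
Proof. by case: rho => [u|[u w]] /=; rewrite /add_scaled; ring. Qed.

Lemma Bx_scale (c : T -> R) a rho : Bx (fun u => a * c u) rho = a * Bx c rho.
Proof. by case: rho => [u|[u w]] /=; ring. Qed.

Lemma suppB_scale (c : T -> R) a : a != 0 -> suppB e (fun u => a * c u) = suppB e c.
Proof. by move=> a0; apply/setP => rho; rewrite !inE Bx_scale mulf_eq0 (negbTE a0). Qed.

Lemma circuit_scale (c : T -> R) a : a != 0 -> circuit e c -> circuit e (fun u => a * c u).
Proof.
move=> a0 [[u cu] minc]; split; first by exists u; rewrite mulf_neq0.
by rewrite suppB_scale //; apply: minc.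
Qed.

Lemma suppB_sub_eq0 (y c : T -> R) rho :
  suppB e y \subset suppB e c -> is_row e rho -> Bx c rho = 0 -> Bx y rho = 0.
Proof.
move=> sub row c0; apply/eqP; apply: contraTT sub => y0.
by apply/subsetPn; exists rho; rewrite !inE row ?y0 ?c0 ?eqxx.
Qed.

(* Maximality of the step length is witnessed by a constraint that is tight
   at the endpoint and strictly increasing along the circuit. *)
Lemma tight_circuit_step (x1 x2 c : T -> R) a rho :
  circuit e c -> 0 < a -> x2 = add_scaled x1 a c -> inP e x2 ->
  is_row e rho -> Bx x2 rho = rhs R rho -> 0 < Bx c rho -> circuit_step e x1 x2.
Proof.
move=> cc a0 def_x2 P2 row tight pos; exists c, a; split => // b ab Pb.
have := Pb rho row; rewrite Bx_add_scaled.
have -> : Bx x1 rho = Bx x2 rho - a * Bx c rho by rewrite def_x2 Bx_add_scaled; ring.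
have : 0 < (b - a) * Bx c rho by rewrite mulr_gt0 // subr_gt0.
lra.
Qed.

Definition reach (x y : T -> R) (n : nat) :=
  exists2 l, (l <= n)%N & circuit_walk e x y l.

Definition reach2 (x y : T -> R) (n : nat) := reach x y n /\ reach y x n.

Lemma reach_refl (x : T -> R) n : reach x x n.
Proof. by exists 0%N; last exact: cw_nil. Qed.

Lemma reach_step (x y : T -> R) : circuit_step e x y -> reach x y 1.
Proof. by move=> s; exists 1%N; last exact: cw_cons s (cw_nil _ _). Qed.

Lemma reach_le (x y : T -> R) m n : (m <= n)%N -> reach x y m -> reach x y n.
Proof. by move=> mn [l lm w]; exists l; first exact: leq_trans mn. Qed.

Lemma reach_cat (x y z : T -> R) m n : reach x y m -> reach y z n -> reach x z (m + n).
Proof.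
move=> [l1 h1 w1] [l2 h2 w2]; exists (l1 + l2)%N; first exact: leq_add.
elim: w1 {h1} w2 => [a|a b c l s _ IH] w2; first by rewrite add0n.
by rewrite addSn; apply: cw_cons s (IH w2).
Qed.

Lemma reach2_refl (x : T -> R) n : reach2 x x n.
Proof. by split; apply: reach_refl. Qed.

Lemma reach2_sym (x y : T -> R) n : reach2 x y n -> reach2 y x n.
Proof. by case. Qed.

Lemma reach2_cat (x y z : T -> R) m n : reach2 x y m -> reach2 y z n -> reach2 x z (m + n).
Proof.
by move=> [xy yx] [yz zy]; split; [|rewrite addnC]; [apply: reach_cat xy yz|apply: reach_cat zy yx].
Qed.

Lemma tight_circuit_bistep (x1 x2 c : T -> R) a rho1 rho2 :
  circuit e c -> 0 < a -> x2 = add_scaled x1 a c -> inP e x1 -> inP e x2 ->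
  is_row e rho2 -> Bx x2 rho2 = rhs R rho2 -> 0 < Bx c rho2 ->
  is_row e rho1 -> Bx x1 rho1 = rhs R rho1 -> Bx c rho1 < 0 ->
  reach2 x1 x2 1.
Proof.
move=> cc a0 def_x2 P1 P2 row2 t2 p2 row1 t1 n1; split; apply: reach_step.
  exact: tight_circuit_step cc a0 def_x2 P2 row2 t2 p2.
apply: (tight_circuit_step (circuit_scale (a := -1) _ cc) a0 _ P1 row1 t1).
- by rewrite oppr_eq0 oner_eq0.
- by apply: funext => u; rewrite def_x2 /add_scaled; ring.
- by rewrite Bx_scale mulN1r oppr_gt0.
Qed.

Lemma inP_downward (z z' : T -> R) :
  inP e z -> (forall u, 0 <= z' u <= z u) -> inP e z'.
Proof.
move=> Pz le_z [u|[u w]] /= row; first by case/andP: (le_z u); rewrite oppr_le0.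
have := Pz (inr (u, w)) row; case/andP: (le_z u) => _ ?; case/andP: (le_z w) => _ ?; rewrite /=; lra.
Qed.

Lemma inP_ge0 (x : T -> R) u : inP e x -> 0 <= x u.
Proof. by move=> Px; have := Px (inl u) isT; rewrite /= oppr_le0. Qed.

Lemma inP_edge_le1 (x : T -> R) u w : inP e x -> e u w -> x u <= 1.
Proof. by move=> Px euw; have := Px (inr (u, w)) euw; have := inP_ge0 w Px; rewrite /=; lra. Qed.

Lemma inP_zero : inP e (fun _ : T => 0 : R).
Proof. by case=> [u|[u w]] /= _; rewrite ?oppr0 ?addr0 ?ler01. Qed.

End CircuitWalks.

Arguments inP_zero {R T e}.

Section Distances.
Variables (T : finType) (e : rel T).
Hypothesis e_sym : symmetric e.
Hypothesis conn : forall u w : T, connect e u w.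

Lemma dist_le_cat u v w m n : dist_le e u v m -> dist_le e v w n -> dist_le e u w (m + n).
Proof.
move=> [p [pp <- sp]] [q [pq <- sq]]; exists (p ++ q).
by rewrite cat_path pp pq last_cat size_cat leq_add.
Qed.

Lemma dist_le_sym u v n : dist_le e u v n -> dist_le e v u n.
Proof.
move=> [p [pp <- sp]]; exists (rev (belast u p)); split.
- by rewrite rev_path (eq_path (e' := e)) // => a b; apply: e_sym.
- by case: p {pp sp} => //= a p; rewrite rev_cons last_rcons.
- by rewrite size_rev size_belast.
Qed.

Lemma within_reroot v u k : within e v k -> within e u (k + k).
Proof. by move=> wk w; apply: dist_le_cat (dist_le_sym (wk u)) (wk w). Qed.

Lemma exists_neighbor u : (1 < #|T|)%N -> exists w, e u w.
Proof.
case/card_gt1P => a [b [_ _ ab]].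
have [w wu] : exists w, w != u.
  by case: (eqVneq a u) => [au|]; [exists b; rewrite -au eq_sym|exists a].
case/connectP: (conn u w) => [[|w' p] /=]; first by move=> _ wu'; rewrite wu' eqxx in wu.
by case/andP=> euw' _ _; exists w'.
Qed.

Lemma within_gt0 v k : (1 < #|T|)%N -> within e v k -> (0 < k)%N.
Proof.
case/card_gt1P => a [b [_ _ ab]] wk; rewrite lt0n; apply: contraNneq ab => k0.
have at_v w : w = v by case: (wk w) => -[|? ?] [_ <-]; rewrite ?k0.
by rewrite (at_v a) (at_v b).
Qed.

Fixpoint ball (r : T) (j : nat) : {set T} :=
  if j is j'.+1 then ball r j' :|: [set w | [exists u in ball r j', e u w]] else [set r].

Lemma ball_edge r j u w : u \in ball r j -> e u w -> w \in ball r j.+1.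
Proof. by move=> Hu euw; rewrite !inE; apply/orP; right; apply/existsP; exists u; rewrite Hu. Qed.

Lemma ball_mono r i j : (i <= j)%N -> {subset ball r i <= ball r j}.
Proof.
move/subnK <-; elim: (j - i)%N => [|n IH] // u /IH.
by rewrite addSn /= inE => ->.
Qed.

Lemma ball_path r j x p :
  path e x p -> x \in ball r j -> last x p \in ball r (j + size p).
Proof.
elim: p x j => [|y p IH] x j /=; first by rewrite addn0.
case/andP=> exy pp Hx; rewrite addnS -addSn; apply: IH => //.
exact: ball_edge Hx exy.
Qed.

Lemma dist_le_ball r u n : dist_le e r u n -> u \in ball r n.
Proof.
move=> [p [pp <- sp]]; apply: (ball_mono sp).
by rewrite -[size p]add0n; apply: ball_path; rewrite ?inE.
Qed.

Lemma exists_ball r u : exists j, u \in ball r j.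
Proof. by case/connectP: (conn r u) => p pp ->; exists (size p); apply: dist_le_ball; exists p. Qed.

Definition dist r u := ex_minn (exists_ball r u).

Lemma in_ball r u j : (u \in ball r j) = (dist r u <= j)%N.
Proof.
rewrite /dist; case: ex_minnP => m um m_min; apply/idP/idP; first exact: m_min.
by move=> mj; apply: (ball_mono mj).
Qed.

Lemma dist_le_dist r u n : dist_le e r u n -> (dist r u <= n)%N.
Proof. by move/dist_le_ball; rewrite in_ball. Qed.

Lemma dist_root r : dist r r = 0%N.
Proof. by apply/eqP; rewrite -leqn0 -in_ball inE. Qed.

Lemma dist_eq0 r u : dist r u = 0%N -> u = r.
Proof. by move=> d0; have := leqnn (dist r u); rewrite -in_ball d0 inE => /eqP. Qed.

Lemma dist_edge r u w : e u w -> (dist r w <= (dist r u).+1)%N.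
Proof. by move=> euw; rewrite -in_ball; apply: ball_edge euw; rewrite in_ball. Qed.

Lemma dist_parent r u : (0 < dist r u)%N -> exists2 w, e u w & (dist r w).+1 = dist r u.
Proof.
case def_d: (dist r u) => [|j] // _.
have := leqnn (dist r u); rewrite -in_ball def_d !inE in_ball def_d ltnn /=.
case/existsP=> w /andP [wj ewu]; rewrite in_ball in wj; exists w; first by rewrite e_sym.
by have := dist_edge r ewu; rewrite def_d; lia.
Qed.

End Distances.

Section Vertices.
Variables (R : realType) (T : finType) (e : rel T).
Hypothesis conn : forall u w : T, connect e u w.
Hypothesis card2 : (1 < #|T|)%N.

Lemma inP_le1 (x : T -> R) u : inP e x -> x u <= 1.
Proof. by have [w euw] := exists_neighbor conn u card2; move/inP_edge_le1; apply; apply: euw. Qed.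

Lemma vertex_rigid (y g : T -> R) t : vertex e y -> 0 < t ->
  inP e (add_scaled y t g) -> inP e (add_scaled y (- t) g) -> forall u, g u = 0.
Proof.
move=> [_ extreme] t0 P1 P2 u.
have := extreme _ _ (1/2) P1 P2 ltac:(lra) ltac:(lra).
have mid : y = (fun u => 1/2 * add_scaled y t g u + (1 - 1/2) * add_scaled y (- t) g u).
  by apply: funext => w; rewrite /add_scaled; field.
move/(_ mid)/(congr1 (fun f => f u)); rewrite /add_scaled mulNr => E.
have /eqP : t * g u = 0 by lra.
by rewrite mulf_eq0 (gt_eqF t0) => /eqP.
Qed.

Definition grid (a : R) (x : T -> R) := forall u, [\/ x u = 0, x u = a | x u = a + a].

(* Moving the coordinates in (0,1/2) up and those in (1/2,1) down by a common
   small amount, or the reverse, stays feasible; [y] is the midpoint. *)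
Lemma vertex_grid_half (y : T -> R) : vertex e y -> grid (1/2) y.
Proof.
move=> vy; have Py := vy.1.
pose low u := (0 < y u) && (y u < 1/2).
pose high u := (1/2 < y u) && (y u < 1).
pose g u : R := if low u then 1 else if high u then -1 else 0.
pose margin u : R := if low u then Num.min (y u) (1/2 - y u)
  else if high u then Num.min (y u - 1/2) (1 - y u) else 1.
pose t := \big[Num.min/1]_u margin u.
have t0 : 0 < t.
  apply: lt_bigmin => // u _; rewrite /margin /low /high.
  by do 2![case: ifP => [/andP [? ?]|_]; first by rewrite lt_min; apply/andP; split; lra]; lra.
have cases u : [\/ [/\ g u = 1, t <= y u & y u + t <= 1/2],
                   [/\ g u = -1, 1/2 + t <= y u & y u + t <= 1]
                 | g u = 0 /\ [\/ y u = 0, y u = 1/2 | y u = 1]].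
  have := bigmin_le 1 u margin; rewrite -/t /g /margin /low /high.
  have := inP_ge0 u Py; have := inP_le1 u Py.
  case: ifP => [/andP [? ?]|/negbT]; first by rewrite le_min => _ _ /andP [? ?]; apply: Or31; split; lra.
  case: ifP => [/andP [? ?]|/negbT]; first by rewrite le_min => _ _ _ /andP [? ?]; apply: Or32; split; lra.
  rewrite !negb_and -!leNgt => ? ? ? ? _; apply: Or33; split => //.
  by case: (ltrgtP (y u) (1/2)) => ?; [apply: Or31|apply: Or33|apply: Or32]; lra.
have feas s : -t <= s -> s <= t -> inP e (add_scaled y s g).
  move=> ? ? [u|[u w]] /= row; rewrite /add_scaled.
    by case: (cases u) => [[-> ? ?]|[-> ? ?]|[-> _]]; have := inP_ge0 u Py; lra.
  have := Py (inr (u, w)) row; rewrite /=.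
  by case: (cases u) => [[-> ? ?]|[-> ? ?]|[-> [->|->|->]]];
     case: (cases w) => [[-> ? ?]|[-> ? ?]|[-> [->|->|->]]]; lra.
have g0 := vertex_rigid vy t0 (feas t ltac:(lra) ltac:(lra)) (feas (- t) ltac:(lra) ltac:(lra)).
move=> u; case: (cases u) => [[gu _ _]|[gu _ _]|[_ [->|->|->]]]; try (by rewrite g0 in gu; lra).
- exact: Or31.
- exact: Or32.
- by apply: Or33; lra.
Qed.

End Vertices.

Section Rooted.
Variables (R : realType) (T : finType) (e : rel T).
Hypothesis e_sym : symmetric e.
Hypothesis e_irr : irreflexive e.
Hypothesis conn : forall u w : T, connect e u w.
Hypothesis card2 : (1 < #|T|)%N.
Variable r : T.

Local Notation d := (dist conn r).

Lemma dist_neq0 u : u != r -> (0 < d u)%N.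
Proof. by move=> ur; rewrite lt0n; apply/eqP => /dist_eq0 ur0; rewrite ur0 eqxx in ur. Qed.

Lemma edge_same_parity u w : e u w -> odd (d u) = odd (d w) -> d u = d w.
Proof.
move=> euw par; have uw := dist_edge conn r euw.
have wu : (d u <= (d w).+1)%N by apply: dist_edge; rewrite e_sym.
case: (ltngtP (d u) (d w)) => // [lt|gt].
  have /eqP dw : d w == (d u).+1 by rewrite eqn_leq uw lt.
  by move: par; rewrite dw /=; case: odd.
have /eqP du : d u == (d w).+1 by rewrite eqn_leq wu gt.
by move: par; rewrite du /=; case: odd.
Qed.

Lemma layer1_root_edge u : d u = 1%N -> e r u.
Proof.
move=> du; have [|w euw dw] := dist_parent e_sym (conn := conn) (r := r) (u := u); first by rewrite du.
by move: dw; rewrite du => /eqP; rewrite eqSS => /eqP/dist_eq0 wr; rewrite e_sym -wr.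
Qed.

Lemma root_edge_layer1 w : e r w -> d w = 1%N.
Proof.
move=> erw; have := dist_edge conn r erw; rewrite dist_root.
have : w != r by apply: contraTneq erw => ->; rewrite e_irr.
by move/dist_neq0; lia.
Qed.

Definition parent_closed (S : pred T) :=
  S r /\ forall u, S u -> u != r -> exists w, [/\ S w, e u w & (d w).+1 = d u].

Definition alt (phi : bool) (S : pred T) : T -> R :=
  fun u => if S u then (if odd (d u) == phi then -1 else 1) else 0.

Lemma alt_circuit phi S : parent_closed S -> circuit e (alt phi S).
Proof.
move=> [Sr Sparent].
have signS n : (if odd n.+1 == phi then -1 else 1) = - (if odd n == phi then -1 else 1) :> R.
  by rewrite /=; case: odd; case: phi; rewrite ?opprK.
set c := alt phi S.
have cr2 : c r * c r = 1 by rewrite /c /alt Sr; case: ifP => _; ring.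
split; first by exists r; rewrite /c /alt Sr; case: ifP; rewrite ?oppr_eq0 oner_eq0.
move=> y [u0 yu0] sub.
have y_out u : ~~ S u -> y u = 0.
  move=> Su; apply/eqP; rewrite -oppr_eq0; apply/eqP.
  by apply: (suppB_sub_eq0 (rho := inl u) sub) => //=; rewrite /c /alt (negbTE Su) oppr0.
have y_in n u : d u = n -> S u -> y u = y r * c r * c u.
  elim: n u => [|n IH] u du Su; first by rewrite (dist_eq0 du) -mulrA cr2 mulr1.
  have ur : u != r by apply/eqP => ur; move: du; rewrite ur dist_root.
  have [w [Sw euw dw]] := Sparent u Su ur.
  have cuw : c u = - c w by rewrite /c /alt Su Sw -dw signS.
  have yuw : y u + y w = 0.
    by apply: (suppB_sub_eq0 (rho := inr (u, w)) sub) => //=; rewrite cuw addNr.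
  have -> : y u = - y w by apply/eqP; rewrite -addr_eq0 yuw.
  by rewrite (IH w) ?cuw ?mulrN //; apply/eqP; rewrite -eqSS dw du.
have def_y : y = (fun u => y r * c r * c u).
  apply: funext => u; case Su: (S u); first exact: y_in.
  by rewrite y_out ?Su // /c /alt Su mulr0.
rewrite def_y suppB_scale //; apply: contraNneq yu0 => l0.
by rewrite def_y l0 mul0r.
Qed.

Lemma root_parent_closed : parent_closed (pred1 r).
Proof. by split => [|u /eqP ->]; rewrite /= eqxx. Qed.

Lemma root_layer1_parent_closed (P : pred T) :
  parent_closed (fun u => (u == r) || ((d u == 1%N) && P u)).
Proof.
split => [|u /orP [/eqP -> /eqP //|/andP [/eqP du _]] _]; first by rewrite eqxx.
by exists r; rewrite eqxx dist_root du e_sym layer1_root_edge.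
Qed.

Lemma ball_parent_closed m (U : pred T) :
  (0 < m)%N -> (forall u, U u -> d u = m) -> parent_closed (fun u => (d u < m)%N || U u).
Proof.
move=> m0 Um; split => [|u Su ur]; first by rewrite dist_root m0.
have [w euw dw] := dist_parent e_sym (dist_neq0 ur).
exists w; split => //; apply/orP; left.
by case/orP: Su => [|/Um]; lia.
Qed.

Lemma exists_layer1 : exists w, d w = 1%N.
Proof. by have [w erw] := exists_neighbor conn r card2; exists w; apply: root_edge_layer1. Qed.

Definition wave (a : R) (m : nat) (phi : bool) (f : T -> R) : T -> R :=
  fun u => if (d u < m)%N then (if odd (d u) == phi then a else 0) else f u.

Lemma eq_wave a m phi f g :
  (forall u, (m <= d u)%N -> f u = g u) -> wave a m phi f = wave a m phi g.
Proof.
move=> fg; apply: funext => u.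
by rewrite /wave; case: ltnP => // /fg.
Qed.

Definition level_edges_from (j : nat) := forall u w, e u w -> d u = d w -> (j <= d u)%N.

Definition has_level_edge := [exists u, [exists w, e u w && (d u == d w)]].

Lemma level_edges_from_le i j : (i <= j)%N -> level_edges_from j -> level_edges_from i.
Proof. by move=> ij lev u w euw duw; apply: leq_trans ij (lev u w euw duw). Qed.

Lemma no_level_edge j : ~~ has_level_edge -> level_edges_from j.
Proof.
move=> nolev u w euw duw; exfalso; move/negP: nolev; apply.
by apply/existsP; exists u; apply/existsP; exists w; rewrite euw duw eqxx.
Qed.

(* Two adjacent nodes both carrying [a] in the wave lie in the same layer, which
   [a <= 1/2] or the absence of level edges makes harmless. *)
Lemma wave_inP a m phi f x :
  0 < a -> a <= 1 -> (a <= 1/2 \/ level_edges_from m) -> inP e x ->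
  (forall u, (m <= d u)%N -> 0 <= f u <= x u) ->
  (odd m != phi -> forall w, d w = m -> a + f w <= 1) ->
  inP e (wave a m phi f).
Proof.
move=> a0 a1 small Px f_x f_bd.
have cross u w : e u w -> (d u < m)%N -> (m <= d w)%N ->
    wave a m phi f u + wave a m phi f w <= 1.
  move=> euw um mw; have := dist_edge conn r euw => wu.
  have dw : d w = m by lia.
  have du : m = (d u).+1 by lia.
  rewrite /wave um ltnNge mw /=; case: eqP => par.
    by apply: f_bd dw; rewrite du /= par; case: phi {par}.
  by rewrite add0r; case/andP: (f_x w mw) => _ fx; have := inP_le1 conn card2 w Px; lra.
case=> [u|[u w]] /= row.
  rewrite oppr_le0 /wave; case: ltnP => [_|/f_x /andP [] //].
  by case: ifP => _; lra.
case: (ltnP (d u) m) => um; case: (ltnP (d w) m) => wm.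
- rewrite /wave um wm; case: eqP => pu; case: eqP => pw; try lra.
  have duw := edge_same_parity row (etrans pu (esym pw)).
  case: small => [|lev]; first lra.
  by have := lev u w row duw; lia.
- exact: cross.
- by rewrite addrC; apply: cross => //; rewrite e_sym.
- rewrite /wave ltnNge um ltnNge wm /=; have := Px (inr (u, w)) row.
  by case/andP: (f_x u um) => _ ?; case/andP: (f_x w wm) => _ ? /=; lra.
Qed.

Lemma flip_pattern (a : R) (b phi : bool) :
  (if b == ~~ phi then a else 0) = (if b == phi then a else 0) + a * (if b == phi then -1 else 1).
Proof. by case: b; case: phi => /=; ring. Qed.

(* The root and a layer-1 node carry the two values of the pattern; in either
   direction, the one dropping from [a] to 0 stops the step. *)
Lemma wave_flip a m phi f g : 0 < a -> (1 < m)%N ->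
  (forall u, (m <= d u)%N -> g u = f u \/ [/\ d u = m, odd m = phi & g u = f u - a]) ->
  inP e (wave a m phi f) -> inP e (wave a m (~~ phi) g) ->
  reach2 e (wave a m phi f) (wave a m (~~ phi) g) 1.
Proof.
move=> a0 m1 fg P1 P2.
pose U u := (m <= d u)%N && (g u != f u).
have Um u : U u -> d u = m by case/andP=> mu; case: (fg u mu) => [->|[]//]; rewrite eqxx.
have [w1 dw1] := exists_layer1.
have rows b : Bx (wave a m b f) (inl (if b then r else w1)) = 0 /\
              Bx (wave a m (~~ b) g) (inl (if b then w1 else r)) = 0.
  by case: b; rewrite /= /wave ?dist_root ?dw1 ?m1 ?(ltnW m1) /= ?oppr0.
apply: (tight_circuit_bistep (c := alt phi (fun u => (d u < m)%N || U u)) (a := a)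
   (rho1 := inl (if phi then r else w1)) (rho2 := inl (if phi then w1 else r))) => //.
- by apply: alt_circuit; apply: ball_parent_closed => //; lia.
- apply: funext => u; rewrite /wave /add_scaled /alt /U.
  case: ltnP => [_|mu]; first exact: flip_pattern.
  case: (fg u mu) => [->|[du par ->]]; first by rewrite eqxx andbF mulr0 addr0.
  have -> : f u - a != f u by apply/eqP; lra.
  by rewrite du par eqxx /=; ring.
- by have [_ ->] := rows phi; case: phi {fg P1 P2 rows}.
- by case: phi {fg P1 P2 rows}; rewrite /= /alt ?dist_root ?dw1 ?m1 ?(ltnW m1) /=; lra.
- by have [-> _] := rows phi.
- by case: phi {fg P1 P2 rows}; rewrite /= /alt ?dist_root ?dw1 ?m1 ?(ltnW m1) /=; lra.
Qed.

(* Layer [j] holds 0, [a] or [2a]: two flips lowering it by [a] clear it, and a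
   plain flip in between restores the parity of the pattern. *)
Lemma wave_extend a j x : 0 < a -> a <= 1 -> (a <= 1/2 \/ level_edges_from j) -> (1 < j)%N ->
  inP e x -> grid a x -> reach2 e (wave a j (odd j) x) (wave a j.+1 (odd j.+1) x) 3.
Proof.
move=> a0 a1 small j1 Px gx.
have x0 u : 0 <= x u := inP_ge0 u Px.
have x1 u : x u <= 1 := inP_le1 conn card2 u Px.
pose g1 u := if d u == j then (if x u == a + a then a else 0) else x u.
pose g2 u := if d u == j then 0 else x u.
have feas phi f : (forall u, 0 <= f u <= x u) -> (forall w, d w = j -> a + f w <= 1) ->
    inP e (wave a j phi f).
  by move=> fx fj; apply: (wave_inP (x := x)).
have P0 : inP e (wave a j (odd j) x).
  by apply: (wave_inP (x := x)) => //; [move=> u _; rewrite x0 lexx|rewrite eqxx].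
have P1 phi : inP e (wave a j phi g1).
  apply: feas => [u|w dw]; rewrite /g1 ?dw ?eqxx.
    case: eqP => _; last by rewrite x0 lexx.
    by case: eqP => [->|_]; [lra|rewrite lexx x0].
  by case: eqP => [xw|_]; [have := x1 w; rewrite xw|rewrite addr0].
have P2 phi : inP e (wave a j phi g2).
  by apply: feas => [u|w dw]; rewrite /g2 ?dw ?eqxx ?addr0 //; case: eqP => _; rewrite ?x0 lexx.
have s1 : reach2 e (wave a j (odd j) x) (wave a j (~~ odd j) g1) 1.
  apply: wave_flip => // u _; rewrite /g1; case: eqP => [du|_]; last by left.
  by case: (gx u) => ->; case: eqP => h; try (exfalso; lra); [left|right..]; try split => //; lra.
have s2 : reach2 e (wave a j (~~ odd j) g1) (wave a j (odd j) g1) 1.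
  by rewrite -{2}[odd j]negbK; apply: wave_flip => // u _; left.
have s3 : reach2 e (wave a j (odd j) g1) (wave a j (~~ odd j) g2) 1.
  apply: wave_flip => // u _; rewrite /g1 /g2; case: eqP => [du|_]; last by left.
  by case: eqP => _; [right; split => //; lra|left].
have -> : wave a j.+1 (odd j.+1) x = wave a j (~~ odd j) g2.
  apply: funext => u; rewrite /wave /g2 ltnS leq_eqVlt.
  by case: (ltngtP (d u) j) => [_|_|->] //=; case: odd.
exact: reach2_cat s1 (reach2_cat s2 s3).
Qed.

Lemma wave_sweep_out a n x : 0 < a -> a <= 1 -> (a <= 1/2 \/ level_edges_from n.+1) ->
  inP e x -> grid a x -> reach2 e (wave a 2 false x) (wave a n.+2 (odd n.+2) x) (3 * n).
Proof.
move=> a0 a1; elim: n => [|n IH] small Px gx; first exact: reach2_refl.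
have small' : a <= 1/2 \/ level_edges_from n.+1.
  by case: small => [|/(level_edges_from_le (leqnSn _))]; [left|right].
by rewrite mulnS addnC; apply: reach2_cat (IH small' Px gx) (wave_extend _ _ _ _ Px gx).
Qed.

Lemma grid_zero (a : R) : grid a (fun _ : T => 0).
Proof. by move=> u; apply: Or31. Qed.

Lemma wave_sweep a K x : (forall u, (d u <= K)%N) -> 0 < a -> a <= 1 ->
  (a <= 1/2 \/ level_edges_from K.+1) -> inP e x -> grid a x ->
  reach2 e (wave a 2 false x) (wave a 2 false (fun _ => 0)) (6 * K).
Proof.
move=> dK a0 a1 small Px gx.
have -> : (6 * K = 3 * K + 3 * K)%N by lia.
apply: reach2_cat (wave_sweep_out a0 a1 small Px gx) _.
rewrite (@eq_wave _ _ _ _ (fun _ => 0)) => [|u]; last by have := dK u; lia.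
exact/reach2_sym/(wave_sweep_out a0 a1 small inP_zero (grid_zero a)).
Qed.

Definition with_root (b : R) (y : T -> R) : T -> R := fun u => if u == r then b else y u.

Lemma with_root_id (y : T -> R) : with_root (y r) y = y.
Proof. by apply: funext => u; rewrite /with_root; case: eqP => [->|]. Qed.

Lemma wave2_with_root a (y : T -> R) :
  (forall u, d u = 1%N -> y u = 0) -> wave a 2 false y = with_root a y.
Proof.
move=> y1; apply: funext => u; rewrite /wave /with_root.
case: (eqVneq u r) => [->|ur]; first by rewrite dist_root.
case: (ltnP (d u) 2) => // du2.
have du : d u = 1%N by have := dist_neq0 ur; lia.
by rewrite du y1.
Qed.

Lemma root_one_layer1 (y : T -> R) u : inP e y -> y r = 1 -> d u = 1%N -> y u = 0.
Proof.
move=> Py yr du; have := Py (inr (r, u)) (layer1_root_edge du).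
by have := inP_ge0 u Py; rewrite /= yr; lra.
Qed.

Lemma step_lower_root (y : T -> R) : inP e y -> 0 < y r -> circuit_step e y (with_root 0 y).
Proof.
move=> Py yr.
apply: (tight_circuit_step (c := alt false (pred1 r)) (a := y r) (rho := inl r)) => //.
- exact/alt_circuit/root_parent_closed.
- apply: funext => u; rewrite /with_root /add_scaled /alt /=.
  by case: eqP => [->|_]; rewrite ?dist_root /=; ring.
- apply: (inP_downward Py) => u; rewrite /with_root.
  by case: eqP => [->|_]; rewrite lexx ?andbT ?(ltW yr) // (inP_ge0 _ Py).
- by rewrite /with_root /= eqxx oppr0.
- by rewrite /alt /= eqxx dist_root /=; lra.
Qed.

Lemma step_raise_root (y : T -> R) b w : inP e y -> b < y r -> e r w -> y r + y w = 1 ->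
  circuit_step e (with_root b y) y.
Proof.
move=> Py byr erw tight.
have wr : (w == r) = false by apply/eqP => wr; move: erw; rewrite wr e_irr.
apply: (tight_circuit_step (c := alt true (pred1 r)) (a := y r - b) (rho := inr (r, w))) => //.
- exact/alt_circuit/root_parent_closed.
- by rewrite subr_gt0.
- apply: funext => u; rewrite /with_root /add_scaled /alt /=.
  by case: eqP => [->|_]; rewrite ?dist_root /=; ring.
- by rewrite /alt /= eqxx wr dist_root /=; lra.
Qed.

Lemma half_root_layer1 (z : T -> R) u : inP e z -> grid (1/2) z -> z r = 1/2 ->
  d u = 1%N -> z u = 0 \/ z u = 1/2.
Proof.
move=> Pz gz zr du; have := Pz (inr (r, u)) (layer1_root_edge du); rewrite /= zr.
by case: (gz u) => ->; [left|right|lra].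
Qed.

Lemma empty_root_reach2_wave (z : T -> R) w : inP e z -> grid (1/2) z -> z r = 1/2 ->
  d w = 1%N -> z w = 1/2 -> reach2 e (with_root 0 z) (wave (1/2) 2 false z) 1.
Proof.
move=> Pz gz zr dw zw.
have wr : (w == r) = false by apply/eqP => wr; move: dw; rewrite wr dist_root.
pose S u := (u == r) || ((d u == 1%N) && (z u == 1/2)).
apply: (tight_circuit_bistep (c := alt true S) (a := 1/2) (rho1 := inl r) (rho2 := inl w)) => //.
- exact/alt_circuit/root_layer1_parent_closed.
- lra.
- apply: funext => u; rewrite /wave /with_root /add_scaled /alt /S.
  case: (eqVneq u r) => [->|ur]; first by rewrite dist_root /=; lra.
  case: (ltnP (d u) 2) => du2 /=; last by rewrite gtn_eqF // mulr0 addr0.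
  have du : d u = 1%N by have := dist_neq0 ur; lia.
  by rewrite du /=; case: (half_root_layer1 Pz gz zr du) => ->; case: eqP => h; lra.
- apply: (inP_downward Pz) => u; rewrite /with_root.
  by case: eqP => _; rewrite lexx ?andbT // (inP_ge0 _ Pz).
- apply: (wave_inP (x := z)) => //; [lra|lra|left; lra|].
  by move=> u _; rewrite lexx (inP_ge0 _ Pz).
- by rewrite /wave /= dw /= oppr0.
- by rewrite /alt /S /= wr dw zw !eqxx /=; lra.
- by rewrite /with_root /= eqxx oppr0.
- by rewrite /alt /S /= eqxx dist_root /=; lra.
Qed.

Lemma half_root_reach2 (z : T -> R) : inP e z -> grid (1/2) z -> z r = 1/2 ->
  reach2 e z (wave (1/2) 2 false z) 2.
Proof.
move=> Pz gz zr.
case: (pickP (fun u => (d u == 1%N) && (z u == 1/2))) => [w /andP [/eqP dw /eqP zw]|none].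
  apply: (reach2_cat (m := 1) _ (empty_root_reach2_wave Pz gz zr dw zw)).
  split; apply: reach_step; first by apply: step_lower_root => //; rewrite zr; lra.
  by apply: (step_raise_root (w := w)) => //; rewrite ?layer1_root_edge ?zr ?zw //; lra.
suff -> : wave (1/2) 2 false z = z by apply: reach2_refl.
rewrite wave2_with_root -?zr ?with_root_id // => u du.
case: (half_root_layer1 Pz gz zr du) => // zu.
by move: (none u); rewrite du zu !eqxx.
Qed.

Definition half_fill (m : nat) (x : T -> R) : T -> R :=
  fun u => if (d u < m)%N then 1/2 else if d u == m then x u / 2 else x u.

Lemma half_fill_inP m x : inP e x -> inP e (half_fill m x).
Proof.
move=> Px; have x0 u := inP_ge0 u Px; have x1 u := inP_le1 conn card2 u Px.
case=> [u|[u w]] /= row.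
  rewrite oppr_le0 /half_fill; case: ifP => _; first lra.
  by case: ifP => _; have := x0 u; lra.
have uw := dist_edge conn r row.
have wu : (d u <= (d w).+1)%N by apply: dist_edge; rewrite e_sym.
have := Px (inr (u, w)) row; have := x0 u; have := x0 w; have := x1 u; have := x1 w.
rewrite /= /half_fill.
by case: (ltngtP (d u) m) => hu; case: (ltngtP (d w) m) => hw /=; try lra; exfalso; lia.
Qed.

Lemma half_fill_grid m x : inP e x -> grid 1 x -> grid (1/2) (half_fill m x).
Proof.
move=> Px gx u; have := inP_le1 conn card2 u Px; rewrite /half_fill.
case: ifP => _; first by move=> _; apply: Or32.
case: ifP => _; case: (gx u) => -> x1;
  by [apply: Or31; lra|apply: Or32; lra|exfalso; lra|apply: Or33; lra].
Qed.

(* The step is stopped by the level edge [u0 w0], whose endpoints both reach 1/2. *)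
Lemma step_half_fill j x u0 w0 : inP e x -> grid 1 x -> e u0 w0 -> d u0 = j -> d w0 = j ->
  circuit_step e (wave 1 j.+1 (odd j.+1) x) (half_fill j.+1 x).
Proof.
move=> Px gx euw du dw.
pose U u := (d u == j.+1) && (x u == 1).
apply: (tight_circuit_step (c := alt (odd j.+1) (fun u => (d u < j.+1)%N || U u)) (a := 1/2)
  (rho := inr (u0, w0))) => //.
- by apply: alt_circuit; apply: ball_parent_closed => // u /andP [/eqP].
- lra.
- apply: funext => u; rewrite /half_fill /wave /add_scaled /alt /U.
  case: ltnP => _ /=; first by case: eqP => _; lra.
  case: eqP => [->|_] /=; last by rewrite mulr0 addr0.
  have := inP_le1 conn card2 u Px.
  by rewrite eqxx; case: (gx u) => -> ?; case: eqP => h; lra.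
- exact: half_fill_inP.
- by rewrite /half_fill /= du dw ltnSn /=; lra.
- by rewrite /alt /= du dw ltnSn /=; case: odd => /=; lra.
Qed.

Lemma first_level_edge : has_level_edge ->
  exists j u w, [/\ e u w, d u = j.+1, d w = j.+1 & level_edges_from j.+1].
Proof.
move=> lev.
have ex : exists j, [exists u, [exists w, [&& e u w, d u == j & d w == j]]].
  case/existsP: lev => u /existsP [w /andP [euw /eqP duw]].
  by exists (d u); apply/existsP; exists u; apply/existsP; exists w; rewrite euw duw !eqxx.
case: (ex_minnP ex) => j /existsP [u /existsP [w /and3P [euw /eqP du /eqP dw]]] jmin.
case: j du dw jmin => [|j] du dw jmin.
  by move: euw; rewrite (dist_eq0 du) (dist_eq0 dw) e_irr.
exists j, u, w; split => // u' w' euw' duw'; apply: jmin.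
by apply/existsP; exists u'; apply/existsP; exists w'; rewrite euw' duw' !eqxx.
Qed.

Lemma integral_wave_reach_half_peak K x : (forall u, (d u <= K)%N) -> has_level_edge ->
  inP e x -> grid 1 x -> reach e (wave 1 2 false x) (wave (1/2) 2 false (fun _ => 0)) (9 * K + 3).
Proof.
move=> dK lev Px gx.
have [j [u0 [w0 [euw du dw lev_j]]]] := first_level_edge lev.
have jK : (j < K)%N by have := dK u0; lia.
have Ph := half_fill_inP j.+2 Px; have gh := half_fill_grid j.+2 Px gx.
have [to_wave _] := wave_sweep_out (n := j) ltr01 (lexx 1) (or_intror lev_j) Px gx.
have switch := reach_step (step_half_fill Px gx euw du dw).
have [to_root _] := half_root_reach2 Ph gh ltac:(by rewrite /half_fill dist_root).
have [sweep _] := wave_sweep dK (a := 1/2) ltac:(lra) ltac:(lra) (or_introl (lexx _)) Ph gh.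
apply: reach_le (reach_cat to_wave (reach_cat switch (reach_cat to_root sweep))).
lia.
Qed.

(* Without level edges every edge joins layers of opposite parity, so moving the
   half-valued nodes by [+-1/2] with the layer sign stays feasible. *)
Lemma vertex_integral (y : T -> R) : ~~ has_level_edge -> vertex e y -> grid 1 y.
Proof.
move=> nolev vy; have Py := vy.1; have gy := vertex_grid_half conn card2 vy.
pose g := alt false (fun u => y u == 1/2).
have feas s : -(1/2) <= s -> s <= 1/2 -> inP e (add_scaled y s g).
  move=> ? ? [u|[u w]] /= row; rewrite /add_scaled /g /alt.
    by case: eqP => [->|_]; [case: eqP => _|rewrite mulr0 addr0 oppr_le0 (inP_ge0 _ Py)]; lra.
  have opp : odd (d u) != odd (d w).
    by apply: contraNneq nolev => /(edge_same_parity row) duw; apply/existsP; exists u;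
       apply/existsP; exists w; rewrite row duw eqxx.
  have := Py (inr (u, w)) row; have := gy u; have := gy w; rewrite /=.
  move=> gw gu yuw; case: (y u =P 1/2) => hu; case: (y w =P 1/2) => hw; rewrite ?mulr0 ?addr0 //.
  - by move: opp; case: (odd (d u)); case: (odd (d w)) => //= _; lra.
  - by case: gw => yw; [|by case: hw|]; case: (odd (d u)) => /=; lra.
  - by case: gu => yu; [|by case: hu|]; case: (odd (d w)) => /=; lra.
have g0 := vertex_rigid vy (t := 1/2) ltac:(lra)
  (feas (1/2) ltac:(lra) ltac:(lra)) (feas (- (1/2)) ltac:(lra) ltac:(lra)).
move=> u; have := g0 u; rewrite /g /alt.
case: (gy u) => ->; rewrite ?eqxx.
- by move=> _; apply: Or31.
- by case: ifP => _; lra.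
- by move=> _; apply: Or32; lra.
Qed.

Lemma wave_root_one (x : T -> R) : inP e x -> x r = 1 -> wave 1 2 false x = x.
Proof.
by move=> Px xr; rewrite wave2_with_root -?xr ?with_root_id // => u; apply: root_one_layer1.
Qed.

Lemma inP_root_peak : inP e (with_root 1 (fun _ => 0)).
Proof.
case=> [u|[u w]] /= row; rewrite /with_root /=.
  by case: eqP => _; rewrite ?oppr0 ?lerN10.
case: eqP => [ur|_]; case: eqP => [wr|_]; rewrite ?addr0 ?add0r ?lexx ?ler01 //.
by move: row; rewrite ur wr e_irr.
Qed.

Lemma with_root_zero (b : R) : with_root 0 (with_root b (fun _ => 0)) = (fun _ => 0).
Proof. by apply: funext => u; rewrite /with_root; case: eqP. Qed.

Lemma zero_reach_peak : reach e (fun _ => 0) (wave 1 2 false (fun _ => 0)) 1.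
Proof.
have [w erw] := exists_neighbor conn r card2.
have wr : (w == r) = false by apply/eqP => wr; move: erw; rewrite wr e_irr.
rewrite wave2_with_root // -{1}(with_root_zero 1); apply: reach_step.
apply: (step_raise_root (w := w)) => //; first exact: inP_root_peak.
  by rewrite /with_root eqxx ltr01.
by rewrite /with_root eqxx wr addr0.
Qed.

Lemma peak_reach_zero a : 0 < a -> a <= 1 -> reach e (wave a 2 false (fun _ => 0)) (fun _ => 0) 1.
Proof.
move=> a0 a1; rewrite wave2_with_root // -[X in reach _ _ X _](with_root_zero a).
apply: reach_step.
apply: step_lower_root; last by rewrite /with_root eqxx.
apply: (inP_downward inP_root_peak) => u; rewrite /with_root.
by case: eqP => _; rewrite ?lexx // ltW.
Qed.

Lemma vertex_root_reach K (x : T -> R) : (forall u, (d u <= K)%N) -> vertex e x ->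
  x r = 1/2 \/ (x r = 1 /\ grid 1 x) ->
  reach e x (fun _ => 0) (15 * K + 6) /\ reach e (fun _ => 0) x (15 * K + 6).
Proof.
move=> dK vx xr; have Px := vx.1; have gx := vertex_grid_half conn card2 vx.
have [lev|nolev] := boolP has_level_edge.
  have zero_half := reach_cat zero_reach_peak
    (integral_wave_reach_half_peak dK lev inP_zero (grid_zero 1)).
  have [xw_half half_xw] := wave_sweep dK (a := 1/2) ltac:(lra) ltac:(lra) (or_introl (lexx _)) Px gx.
  have half_zero := peak_reach_zero (a := 1/2) ltac:(lra) ltac:(lra).
  case: xr => [xr|[xr gx1]].
    have [x_xw xw_x] := half_root_reach2 Px gx xr.
    split; [apply: reach_le (reach_cat x_xw (reach_cat xw_half half_zero))
           |apply: reach_le (reach_cat zero_half (reach_cat half_xw xw_x))]; lia.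
  have x_half := integral_wave_reach_half_peak dK lev Px gx1; rewrite wave_root_one // in x_half.
  have [w erw] := exists_neighbor conn r card2.
  have xw_x : reach e (wave (1/2) 2 false x) x 1.
    rewrite wave2_with_root => [|u]; last exact: root_one_layer1.
    apply/reach_step/(step_raise_root (w := w)) => //; first lra.
    by rewrite xr (root_one_layer1 Px xr (root_edge_layer1 erw)) addr0.
  split; [apply: reach_le (reach_cat x_half half_zero)
         |apply: reach_le (reach_cat zero_half (reach_cat half_xw xw_x))]; lia.
have gx1 := vertex_integral nolev vx.
case: xr => [xr|[xr _]]; first by case: (gx1 r); rewrite xr; lra.
have [x_peak peak_x] := wave_sweep dK (a := 1) ltr01 (lexx 1) (or_intror (no_level_edge _ nolev)) Px gx1.
rewrite wave_root_one // in x_peak peak_x.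
split; [apply: reach_le (reach_cat x_peak (peak_reach_zero ltr01 (lexx 1)))
       |apply: reach_le (reach_cat zero_reach_peak peak_x)]; lia.
Qed.

End Rooted.

(* Root the BFS layers at a node where [x] is nonzero: a 1/2 if there is one,
   otherwise a 1. *)
Lemma vertex_reach_zero (R : realType) (T : finType) (e : rel T) v k (x : T -> R) :
  symmetric e -> irreflexive e -> (forall u w : T, connect e u w) -> (1 < #|T|)%N ->
  within e v k -> vertex e x ->
  reach e x (fun _ => 0) (30 * k + 6) /\ reach e (fun _ => 0) x (30 * k + 6).
Proof.
move=> e_sym e_irr conn card2 wk vx; have gx := vertex_grid_half conn card2 vx.
have reroot u : x u = 1/2 \/ (x u = 1 /\ grid 1 x) ->
    reach e x (fun _ => 0) (30 * k + 6) /\ reach e (fun _ => 0) x (30 * k + 6).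
  move=> xu; rewrite -(_ : (15 * (k + k) + 6 = 30 * k + 6)%N); last lia.
  apply: (vertex_root_reach e_sym e_irr card2 (conn := conn) (r := u)) => // w.
  exact/dist_le_dist/(within_reroot e_sym u wk).
case: (pickP (fun u => x u == 1/2)) => [u /eqP xu|no_half]; first by apply: (reroot u); left.
have gx1 : grid 1 x.
  move=> u; case: (gx u) => xu; [exact: Or31|by move: (no_half u); rewrite xu eqxx|].
  by apply: Or32; lra.
case: (pickP (fun u => x u == 1)) => [u /eqP xu|no_one]; first by apply: (reroot u); right.
suff -> : x = (fun _ => 0) by split; apply: reach_refl.
apply: funext => u; case: (gx1 u) => // xu.
  by move: (no_one u); rewrite xu eqxx.
by have := inP_le1 conn card2 u vx.1; lra.
Qed.

Theorem lemma10 (R : realType) :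
  exists C : R, forall (T : finType) (e : rel T),
    symmetric e -> irreflexive e ->
    (1 < #|T|)%N -> (forall u w : T, connect e u w) ->
    forall (v : T) (k : nat), is_eccentricity e v k ->
    forall x y : T -> R, vertex e x -> vertex e y ->
    exists l : nat, l%:R <= C * k%:R /\ circuit_walk e x y l.
Proof.
exists 72%:R => T e e_sym e_irr card2 conn v k [wk _] x y vx vy.
have k0 := within_gt0 card2 wk.
have [x_zero _] := vertex_reach_zero e_sym e_irr conn card2 wk vx.
have [_ zero_y] := vertex_reach_zero e_sym e_irr conn card2 wk vy.
have [l hl walk] := reach_cat x_zero zero_y.
by exists l; split => //; rewrite -natrM ler_nat; lia.
Qed.
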